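(* Let $k\ge 2$. A maximally-connected coupling $r=(r_{ij})$ of the 1-2 system of $(R^1,R^2)$, if it exists, is unique. Moreover, in this coupling the only entries $r_{ij}$ that can be nonzero are the diagonal entries $r_{11},\dots,r_{kk}$ together with either the entries $r_{i1},r_{i2},\dots,r_{ik}$ of a single fixed row $i$, or the entries $r_{1j},r_{2j},\dots,r_{kj}$ of a single fixed column $j$.
   Context: Let $R^1,R^2$ be two stochastically unrelated random variables with values in $\{1,\dots,k\}$, $\Pr[R^1=i]=p_i$, $\Pr[R^2=i]=q_i$, where $p_i,q_i\ge0$ and $\sum_i p_i=\sum_i q_i=1$. The 1-2 system is the system consisting of the splits $\mathbf 1[R^c\in W]$ ($c=1,2$) for all $W\subseteq\{1,\dots,k\}$ with $|W|\in\{1,2\}$. A maximally-connected coupling of the 1-2 system is a $k\times k$ matrix $r=(r_{ij})$ of nonnegative reals such that: $\sum_j r_{ij}=p_i$ and $\sum_i r_{ij}=q_j$ for all $i,j$; $r_{ii}=\min(p_i,q_i)$ for all $i$; and $r_{ii}+r_{ij}+r_{ji}+r_{jj}=\min(p_i+p_j,q_i+q_j)$ for all $i<j$. (Here $r_{ij}$ is the probability that $R^1$'s bunch is in the state of value $i$ and $R^2$'s in the state of value $j$; the conditions say each 1-split and 2-split pair is maximally coupled.) *)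

(* Values {1..k} are represented by 'I_k = {0..k-1}. *)
From HB Require Import structures.
From mathcomp Require Import all_boot all_order all_algebra.
Set Implicit Arguments. Unset Strict Implicit. Unset Printing Implicit Defensive.
Import Order.TTheory GRing.Theory Num.Theory.
Local Open Scope ring_scope.

Definition is_distr (R : realFieldType) (k : nat) (p : 'I_k -> R) : Prop :=
  (forall i, 0 <= p i) /\ \sum_(i < k) p i = 1.

(* r is a maximally-connected coupling of the 1-2 system of (R^1, R^2),
   where Pr[R^1 = i] = p i and Pr[R^2 = j] = q j. *)
Definition max_conn_coupling (R : realFieldType) (k : nat)
    (p q : 'I_k -> R) (r : 'M[R]_k) : Prop :=
  [/\ (forall i j, 0 <= r i j),
      (forall i, \sum_(j < k) r i j = p i),
      (forall j, \sum_(i < k) r i j = q j),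
      (forall i, r i i = Num.min (p i) (q i)) &
      (forall i j : 'I_k, (i < j)%N ->
         r i i + r i j + r j i + r j j = Num.min (p i + p j) (q i + q j))].

From HB Require Import structures.
From mathcomp Require Import all_boot all_order all_algebra.
From mathcomp Require Import lra.
Import Order.TTheory GRing.Theory Num.Theory.
Set Implicit Arguments. Unset Strict Implicit.
Local Open Scope ring_scope.

(* Write a_i = p_i - min(p_i, q_i) and b_j = q_j - min(p_j, q_j) for the excesses
   of the two marginals.  The row and column sums of a maximally-connected coupling
   bound an off-diagonal entry r_ij by a_i and by b_j, while the 2-split condition
   says r_ij + r_ji = min(a_i, b_j) + min(a_j, b_i); hence r_ij = min(a_i, b_j),
   which gives uniqueness.  An off-diagonal entry is thus nonzero only if a_i > 0
   and b_j > 0.  The row sums now read  sum_j min(a_i, b_j) = a_i.  If b has two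
   positive entries, this forces b_j < a_i for all j, i.e. a_i = sum_j b_j, for
   every positive a_i; as sum_i a_i = sum_j b_j, only one a_i can be positive. *)

Ltac case_min_lra :=
  repeat match goal with |- context [Num.min ?x ?y] => case: (lerP x y) end;
  intros; try split; lra.

Lemma ler_sum_pair (R : realDomainType) (k : nat) (f : 'I_k -> R) (i j : 'I_k) :
  (forall x, 0 <= f x) -> j != i -> f i + f j <= \sum_x f x.
Proof.
move=> f_ge0 ji; rewrite (bigD1 i) //= (bigD1 j) /=; last by rewrite ji.
by rewrite addrA lerDl sumr_ge0.
Qed.

Lemma at_most_one_exists (k : nat) (P : pred 'I_k) : (0 < k)%N ->
  {in P &, forall x y, x = y} -> exists x0, forall x, P x -> x = x0.
Proof.
move=> k_gt0 P_uniq; case: (pickP P) => [x0 Px0|P0].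
- by exists x0 => x Px; exact: P_uniq.
- by exists (Ordinal k_gt0) => x; rewrite P0.
Qed.

Section Excess.
Variables (R : realDomainType) (k : nat).
Implicit Types p q : 'I_k -> R.

Definition excess p q i := p i - Num.min (p i) (q i).

Lemma excess_ge0 p q i : 0 <= excess p q i.
Proof. rewrite /excess; case_min_lra. Qed.

Lemma min_excess_diag p q i : Num.min (excess p q i) (excess q p i) = 0.
Proof. rewrite /excess minC; apply/eqP; rewrite eq_le; case_min_lra. Qed.

Lemma min_pair_excess p q i j :
  Num.min (p i + p j) (q i + q j) - Num.min (p i) (q i) - Num.min (p j) (q j) =
  Num.min (excess p q i) (excess q p j) + Num.min (excess p q j) (excess q p i).
Proof. rewrite /excess ![Num.min (q _) _]minC; apply/eqP; rewrite eq_le; case_min_lra. Qed.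

Lemma sum_excess p q :
  \sum_i p i = \sum_i q i -> \sum_i excess p q i = \sum_i excess q p i.
Proof.
move=> sum_pq; rewrite /excess !sumrB sum_pq; congr (_ - _).
by apply: eq_bigr => i _; rewrite minC.
Qed.

End Excess.

Section ExcessSupport.
Variables (R : realDomainType) (k : nat) (a b : 'I_k -> R).
Hypotheses (a_ge0 : forall i, 0 <= a i) (b_ge0 : forall j, 0 <= b j).
Hypothesis sum_ab : \sum_i a i = \sum_j b j.
Hypothesis row_min : forall i, \sum_j Num.min (a i) (b j) = a i.

Lemma row_min_spread i j1 j2 : j1 != j2 -> 0 < b j1 -> 0 < b j2 ->
  0 < a i -> a i = \sum_j b j.
Proof.
move=> j12 b1_gt0 b2_gt0 ai_gt0.
have min_ge0 j : 0 <= Num.min (a i) (b j) by rewrite le_min a_ge0 b_ge0.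
have b_lt_a j : b j < a i.
  rewrite ltNge; apply/negP => ai_le_bj.
  have [j' j'j bj'_gt0] : exists2 j', j' != j & 0 < b j'.
    by case: (eqVneq j1 j) => [<-|]; [exists j2; rewrite // eq_sym | exists j1].
  have := ler_sum_pair min_ge0 j'j; rewrite row_min (min_l ai_le_bj).
  by move: bj'_gt0 ai_gt0; case_min_lra.
rewrite -{1}row_min; apply: eq_bigr => j _; exact/min_r/ltW.
Qed.

Lemma excess_support :
  {in [pred i | 0 < a i] &, forall i i', i = i'} \/
  {in [pred j | 0 < b j] &, forall j j', j = j'}.
Proof.
case: (boolP [exists j1, exists j2, [&& j1 != j2, 0 < b j1 & 0 < b j2]]).
- case/existsP=> j1 /existsP[j2 /and3P[j12 b1_gt0 b2_gt0]]; left.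
  move=> i i'; rewrite !inE => ai_gt0 ai'_gt0.
  have [//|ii'] := eqVneq i i'; exfalso.
  have := ler_sum_pair a_ge0 ii'; rewrite sum_ab.
  have := row_min_spread j12 b1_gt0 b2_gt0 ai_gt0.
  have := row_min_spread j12 b1_gt0 b2_gt0 ai'_gt0; lra.
- move=> no_two; right => j j'; rewrite !inE => bj_gt0 bj'_gt0.
  apply/eqP; apply: contraNT no_two => jj'.
  by apply/existsP; exists j; apply/existsP; exists j'; rewrite jj' bj_gt0.
Qed.

End ExcessSupport.

Section Coupling.
Variables (R : realFieldType) (k : nat) (p q : 'I_k -> R) (r : 'M[R]_k).
Hypothesis r_coupling : max_conn_coupling p q r.

Let a := excess p q.
Let b := excess q p.

Lemma coupling_le_row_excess i j : i != j -> r i j <= a i.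
Proof.
case: r_coupling => r_ge0 row_sum _ diag _ ij.
have := ler_sum_pair (r_ge0 i) (i := i) (j := j); rewrite eq_sym row_sum diag.
by rewrite /a /excess => /(_ ij); lra.
Qed.

Lemma coupling_le_col_excess i j : i != j -> r i j <= b j.
Proof.
case: r_coupling => r_ge0 _ col_sum diag _ ij.
have := ler_sum_pair (fun x => r_ge0 x j) (i := j) (j := i); rewrite col_sum diag.
by rewrite /b /excess minC => /(_ ij); lra.
Qed.

Lemma coupling_pair i j : i != j ->
  r i j + r j i = Num.min (a i) (b j) + Num.min (a j) (b i).
Proof.
case: r_coupling => _ _ _ diag pair ij; rewrite -min_pair_excess -!diag.
case: (ltngtP i j) => [lt_ij|lt_ji|eq_ij]; last by rewrite (val_inj eq_ij) eqxx in ij.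
- by rewrite -pair //; lra.
- by rewrite addrC [p i + _]addrC [q i + _]addrC -pair //; lra.
Qed.

Lemma coupling_offdiag i j : i != j -> r i j = Num.min (a i) (b j).
Proof.
move=> ij; have ji : j != i by rewrite eq_sym.
have le_ij : r i j <= Num.min (a i) (b j).
  by rewrite le_min coupling_le_row_excess ?coupling_le_col_excess.
have le_ji : r j i <= Num.min (a j) (b i).
  by rewrite le_min coupling_le_row_excess ?coupling_le_col_excess.
by have := coupling_pair ij; lra.
Qed.

Lemma coupling_row_min i : \sum_j Num.min (a i) (b j) = a i.
Proof.
case: r_coupling => _ row_sum _ diag _.
rewrite (bigD1 i) //= min_excess_diag add0r.
under eq_bigr => j ji do rewrite -coupling_offdiag 1?eq_sym //.
by have := row_sum i; rewrite (bigD1 i) //= diag /a /excess; lra.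
Qed.

Lemma coupling_neq0_excess_gt0 i j : i != j -> r i j != 0 -> 0 < a i /\ 0 < b j.
Proof.
move=> ij; rewrite coupling_offdiag // !lt_def !excess_ge0 !andbT.
move=> nz; split; apply: contraNneq nz => ->.
- by rewrite min_l ?excess_ge0.
- by rewrite min_r ?excess_ge0.
Qed.

End Coupling.

Theorem theorem5 (R : realFieldType) (k : nat) (hk : (2 <= k)%N)
    (p q : 'I_k -> R) (hp : is_distr p) (hq : is_distr q) :
  (forall r1 r2 : 'M[R]_k,
      max_conn_coupling p q r1 -> max_conn_coupling p q r2 -> r1 = r2) /\
  (forall r : 'M[R]_k, max_conn_coupling p q r ->
      (exists i0 : 'I_k, forall i j : 'I_k, i != j -> r i j != 0 -> i = i0) \/
      (exists j0 : 'I_k, forall i j : 'I_k, i != j -> r i j != 0 -> j = j0)).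
Proof.
have k_gt0 : (0 < k)%N by apply: ltnW.
split=> [r1 r2 r1_coupling r2_coupling | r r_coupling].
  apply/matrixP => i j; have [<-|ij] := eqVneq i j.
  - by case: r1_coupling => _ _ _ -> _; case: r2_coupling => _ _ _ -> _.
  - by rewrite (coupling_offdiag r1_coupling ij) (coupling_offdiag r2_coupling ij).
have excess_gt0 := coupling_neq0_excess_gt0 r_coupling.
have sum_pq : \sum_i p i = \sum_i q i by rewrite hp.2 hq.2.
have [a_uniq|b_uniq] := excess_support (@excess_ge0 _ _ p q) (@excess_ge0 _ _ q p)
  (sum_excess sum_pq) (coupling_row_min r_coupling).
- have [i0 a_i0] := at_most_one_exists k_gt0 a_uniq.
  by left; exists i0 => i j ij /(excess_gt0 _ _ ij)[/a_i0].
- have [j0 b_j0] := at_most_one_exists k_gt0 b_uniq.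
  by right; exists j0 => i j ij /(excess_gt0 _ _ ij)[_ /b_j0].
Qed.
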